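(* Let $\mathbf{X}\in\mathbb{R}^{n\times p}$, $\mathbf{Y}\in\mathbb{R}^n$, let $\{1,\dots,p\}$ be partitioned into disjoint groups $\mathcal{G}_1,\dots,\mathcal{G}_K$, and fix $\widetilde\lambda_{\mathrm{init}}>0$. Define $$\mathbf{M}=\Big(\tfrac{\mathbf{X}^\top\mathbf{X}}{n}+\widetilde\lambda_{\mathrm{init}}\mathbf{I}\Big)^{-1}\tfrac{\mathbf{X}^\top\mathbf{X}}{n},\qquad \mathbf{N}=\tfrac{1}{\sqrt n}\Big(\tfrac{\mathbf{X}^\top\mathbf{X}}{n}+\widetilde\lambda_{\mathrm{init}}\mathbf{I}\Big)^{-1}\mathbf{X}^\top,\qquad \widetilde{\mathbf{w}}=\Big(\tfrac{\mathbf{X}^\top\mathbf{X}}{n}+\widetilde\lambda_{\mathrm{init}}\mathbf{I}\Big)^{-1}\tfrac{\mathbf{X}^\top\mathbf{Y}}{n},$$ the $K\times K$ matrix $\mathbf{A}$ with entries $A_{gh}=\|\mathbf{M}_{\mathcal{G}_g,\mathcal{G}_h}\|_F^2/n$, and vectors $\widehat{\mathbf u},\mathbf v\in\mathbb{R}^K$ with $\widehat u_g=\|\widetilde{\mathbf w}_{\mathcal{G}_g}\|_2^2$ and $v_g=\|\mathbf N_{\mathcal G_g,\cdot}\|_F^2/n$. For $\mathbb{s}>0$ let $$\widehat{\mathbf d}(\mathbb{s})=\operatorname{argmin}_{\mathbf d\in[0,\infty)^K}\Big\|\mathbf A\mathbf d-\frac{\widehat{\mathbf u}}{\mathbb{s}^2}+\mathbf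 v\Big\|_2^2,\qquad \widehat\lambda_g(\mathbb{s})=1/\widehat d_g(\mathbb{s})\in(0,\infty]$$ (with $1/0=\infty$). Assume $\mathbf A$ is invertible and $\widehat u_g>0$ for all $g$. Then: 1. If $\mathbb{s}^2\ge\max_g\{\widehat u_g/v_g\}$, then $\widehat\lambda_g(\mathbb{s})=\infty$ for all $g$, i.e. the group ridge estimator $\widehat{\mathbf w}(\widehat{\boldsymbol\lambda}(\mathbb{s}))=0$. 2. As $\mathbb{s}\to0$, $\min_g\widehat\lambda_g(\mathbb{s})\to0$. 3. If $\mathbb{s}_1,\mathbb{s}_2>0$ satisfy $\mathcal S(\mathbb{s}_1)=\mathcal S(\mathbb{s}_2)=:\mathcal S$, where $\mathcal S(\mathbb{s})=\{g:\widehat\lambda_g(\mathbb{s})<\infty\}$, then for every $g\in\mathcal S$, $$\widehat\lambda_g(\mathbb{s}_1)=\Big\{\frac{\mathbb{s}_2^2}{\mathbb{s}_1^2}\widehat\lambda_g(\mathbb{s}_2)^{-1}+\Big(\frac{\mathbb{s}_2^2}{\mathbb{s}_1^2}-1\Big)\tilde v_{\mathcal S,g}\Big\}^{-1},\qquad \tilde v_{\mathcal S,g}=\Big((\mathbf A_{\cdot,\mathcal S}^\top\mathbf A_{\cdot,\mathcal S})^{-1}\mathbf A_{\cdot,\mathcal S}^\top\mathbf v\Big)_g .$$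
   Context: For a matrix $\mathbf B$, $\mathbf B_{\mathcal G_g,\mathcal G_h}$ denotes the submatrix with rows indexed by $\mathcal G_g$ and columns by $\mathcal G_h$, $\mathbf B_{\mathcal G_g,\cdot}$ the rows indexed by $\mathcal G_g$, and $\mathbf A_{\cdot,\mathcal S}$ the columns of $\mathbf A$ indexed by $\mathcal S$; $\mathbf w_{\mathcal G_g}=(w_j)_{j\in\mathcal G_g}$. The vector $(\mathbf A_{\cdot,\mathcal S}^\top\mathbf A_{\cdot,\mathcal S})^{-1}\mathbf A_{\cdot,\mathcal S}^\top\mathbf v$ is indexed by $\mathcal S$. For $\boldsymbol\lambda\in(0,\infty]^K$, the group ridge estimator is $\widehat{\mathbf w}(\boldsymbol\lambda)\in\operatorname{argmin}_{\mathbf w}\{\frac{1}{2n}\sum_i(Y_i-x_i^\top\mathbf w)^2+\sum_g\frac{\lambda_g}{2}\|\mathbf w_{\mathcal G_g}\|_2^2\}$, with $x_i^\top$ the rows of $\mathbf X$, where $\lambda_g=\infty$ forces $\mathbf w_{\mathcal G_g}=0$. *)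

From HB Require Import structures.
From mathcomp Require Import all_boot all_order all_algebra.
From mathcomp Require Import all_classical all_reals all_analysis.
Set Implicit Arguments. Unset Strict Implicit. Unset Printing Implicit Defensive.
Import Order.TTheory GRing.Theory Num.Theory.
Local Open Scope ring_scope.

Section GroupRidge.
Variables (R : realType) (n p K : nat).
Implicit Types (X : 'M[R]_(n, p)) (Y : 'cV[R]_n) (grp : 'I_p -> 'I_K).
(* The partition of {1..p} into groups G_1..G_K is encoded by grp :
   coordinate j belongs to group G_(grp j). *)

Definition gramreg X (lt : R) : 'M[R]_p :=
  (n%:R)^-1 *: (X^T *m X) + lt *: 1%:M.

Definition Mmat X lt : 'M[R]_p :=
  invmx (gramreg X lt) *m ((n%:R)^-1 *: (X^T *m X)).

Definition Nmat X lt : 'M[R]_(p, n) :=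
  (Num.sqrt (n%:R))^-1 *: (invmx (gramreg X lt) *m X^T).

Definition wtilde X Y lt : 'cV[R]_p :=
  invmx (gramreg X lt) *m ((n%:R)^-1 *: (X^T *m Y)).

Definition Amat grp X lt : 'M[R]_K :=
  \matrix_(g, h) ((\sum_(i | grp i == g) \sum_(j | grp j == h)
                     Mmat X lt i j ^+ 2) / n%:R).

Definition uvec grp X Y lt : 'cV[R]_K :=
  \col_g (\sum_(j | grp j == g) wtilde X Y lt j ord0 ^+ 2).

Definition vvec grp X lt : 'cV[R]_K :=
  \col_g ((\sum_(j | grp j == g) \sum_(i < n) Nmat X lt j i ^+ 2) / n%:R).

Definition dobj (A : 'M[R]_K) (u v : 'cV[R]_K) (s : R) (d : 'cV[R]_K) : R :=
  \sum_(g < K) ((A *m d) g ord0 - u g ord0 / s ^+ 2 + v g ord0) ^+ 2.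

Definition is_dhat (A : 'M[R]_K) (u v : 'cV[R]_K) (s : R) (d : 'cV[R]_K) : Prop :=
  (forall g, 0 <= d g ord0) /\
  (forall d' : 'cV[R]_K, (forall g, 0 <= d' g ord0) ->
       dobj A u v s d <= dobj A u v s d').

Definition lam_of (d : 'cV[R]_K) (g : 'I_K) : \bar R :=
  if d g ord0 == 0 then +oo%E else ((d g ord0)^-1)%:E.

Definition Sset (d : 'cV[R]_K) : {set 'I_K} :=
  [set g | (lam_of d g < +oo)%E].

Definition colS (A : 'M[R]_K) (S : {set 'I_K}) : 'M[R]_(K, #|S|) :=
  \matrix_(i, j) A i (enum_val j).

Definition vtS (A : 'M[R]_K) (S : {set 'I_K}) (v : 'cV[R]_K) : 'cV[R]_#|S| :=
  invmx ((colS A S)^T *m colS A S) *m ((colS A S)^T *m v).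

(* its g-th entry, for g in S (0 for g outside S, never used) *)
Definition vtilde (A : 'M[R]_K) (S : {set 'I_K}) (v : 'cV[R]_K) (g : 'I_K) : R :=
  \sum_(j < #|S|) (enum_val j == g)%:R * vtS A S v j ord0.

(* group ridge objective with penalties lambda in (0,oo]^K;
   groups with lambda_g = +oo are forced to zero. *)
Definition ridge_obj grp X Y (lam : 'I_K -> \bar R) (w : 'cV[R]_p) : R :=
  (2 * n%:R)^-1 * \sum_(i < n) (Y i ord0 - (X *m w) i ord0) ^+ 2 +
  \sum_(g < K | lam g != +oo%E) fine (lam g) / 2 *
      \sum_(j | grp j == g) w j ord0 ^+ 2.

Definition ridge_feasible grp (lam : 'I_K -> \bar R) (w : 'cV[R]_p) : Prop :=
  forall j, lam (grp j) = +oo%E -> w j ord0 = 0.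

Definition is_group_ridge grp X Y (lam : 'I_K -> \bar R) (w : 'cV[R]_p) : Prop :=
  ridge_feasible grp lam w /\
  (forall w', ridge_feasible grp lam w' ->
     ridge_obj grp X Y lam w <= ridge_obj grp X Y lam w').

End GroupRidge.

(* The weights dhat(s) solve the nonnegative least-squares problem
   min_{d >= 0} |A d - b|^2 with target b = s^-2 u - v, and everything follows
   from its KKT conditions: the gradient A^T (A d - b) is nonnegative and
   vanishes on the support of d.
   (1) If u / s^2 <= v the target is nonpositive; as A >= 0, comparing with
       d = 0 forces A d = 0, hence d = 0.
   (2) Pairing the gradient with the row sums a = A 1 gives
       s^-2 <a, u> - <a, v> <= (max_g d_g) |a|^2, so some d_g blows up as s -> 0.
   (3) On the support S the KKT equations are the normal equations of A_S, so
       d_S = s^-2 u~_S - v~_S is affine in s^-2 with coefficients depending on S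
       only; eliminating u~ between two scales gives the formula.
   Positivity of v, used in (1), holds because a zero row block of N makes the
   corresponding rows of M = N X / sqrt n, hence a row of A, vanish. *)

From mathcomp Require Import all_boot all_order all_algebra.
From mathcomp Require Import all_classical all_reals all_analysis.
From mathcomp Require Import ring lra.
Set Implicit Arguments. Unset Strict Implicit. Unset Printing Implicit Defensive.
Import Order.TTheory GRing.Theory Num.Theory.
Import numFieldNormedType.Exports.
Local Open Scope classical_set_scope.
Local Open Scope ring_scope.

Lemma sum_sqr_le0 (R : realDomainType) (m : nat) (x : 'cV[R]_m) :
  \sum_i x i ord0 ^+ 2 <= 0 -> x = 0.
Proof.
move=> le0; apply/matrixP => i j; rewrite (ord1 j) mxE.
apply/eqP; rewrite -sqrf_eq0; apply/eqP.
have x2_ge0 k : true -> 0 <= x k ord0 ^+ 2 by move=> _; apply: sqr_ge0.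
apply: (psumr_eq0P x2_ge0) => //.
by apply/eqP; rewrite eq_le le0 sumr_ge0.
Qed.

Lemma unitmx_row_neq0 (R : comUnitRingType) (m : nat) (A : 'M[R]_m) i :
  A \in unitmx -> exists k, A i k != 0.
Proof.
move=> Au; apply/existsP/contraT; rewrite negb_exists => /forallP Ai0.
move/matrixP: (mulmxV Au) => /(_ i i); rewrite !mxE eqxx big1 => [/eqP|k _].
  by rewrite eq_sym oner_eq0.
by rewrite (eqP (negPn (Ai0 k))) mul0r.
Qed.

Lemma cvge0_le (R : realFieldType) (T : Type) (F : set_system T) {FF : Filter F}
    (f : T -> \bar R) :
  (forall e, 0 < e -> \forall x \near F, (0 <= f x <= e%:E)%E) ->
  f @ F --> 0%:E.
Proof.
move=> f_le; apply/fine_cvgP; split.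
  apply: filterS (f_le 1 ltr01) => x /andP[f0 f1].
  by rewrite ge0_fin_numE // (le_lt_trans f1) ?ltry.
apply/cvgr0Pnorm_le => e e0; apply: filterS (f_le e e0) => x /=.
by case: (f x) => [r||] //= /andP[r0 re]; rewrite ger0_norm -?lee_fin.
Qed.

Lemma near0_sqr_lt (R : realType) (M P : R) : 0 < P ->
  \forall s \near 0^'+, s ^+ 2 * M < P.
Proof.
move=> P0; have PM0 : 0 < P / (`|M| + 1) by rewrite divr_gt0 // ltr_pwDr.
near=> s.
have s0 : 0 < s by near: s; apply: nbhs_right_gt.
have s1 : s < 1 by near: s; apply: nbhs_right_lt.
have sP : s * (`|M| + 1) < P.
  by rewrite -ltr_pdivlMr ?ltr_pwDr //; near: s; apply: nbhs_right_lt.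
have := ler_norm M; have := normr_ge0 M; nra.
Unshelve. all: by end_near.
Qed.

Section NonnegativeLeastSquares.
Variables (R : realType) (K : nat) (A : 'M[R]_K) (b : 'cV[R]_K).

Definition lsq_obj (d : 'cV[R]_K) : R := \sum_g (A *m d - b) g ord0 ^+ 2.

Definition is_nnls (d : 'cV[R]_K) : Prop :=
  (forall g, 0 <= d g ord0) /\
  (forall d' : 'cV[R]_K, (forall g, 0 <= d' g ord0) -> lsq_obj d <= lsq_obj d').

Lemma lsq_objD d e t : lsq_obj (d + t *: e) = lsq_obj d
  + 2 * t * \sum_g (A *m d - b) g ord0 * (A *m e) g ord0
  + t ^+ 2 * \sum_g (A *m e) g ord0 ^+ 2.
Proof.
rewrite /lsq_obj !mulr_sumr -!big_split; apply: eq_bigr => g _ /=.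
by rewrite mulmxDr -scalemxAr !mxE; ring.
Qed.

Lemma nnls_dir_ge0 d e del : is_nnls d -> 0 < del ->
  (forall t, 0 < t -> t <= del -> forall g, 0 <= (d + t *: e) g ord0) ->
  0 <= \sum_g (A *m d - b) g ord0 * (A *m e) g ord0.
Proof.
move=> [_ dmin] del0 feas.
set c := \sum_g _; set q := \sum_g (A *m e) g ord0 ^+ 2.
have q0 : 0 <= q by apply: sumr_ge0 => g _; apply: sqr_ge0.
rewrite leNgt; apply/negP => c0.
(* a step t <= -c/(q+1) makes the first-order decrease 2tc beat t^2 q *)
pose t := Num.min del (- c / (q + 1)).
have t0 : 0 < t by rewrite lt_min del0 divr_gt0 ?oppr_gt0 //; lra.
have t_le : t <= del by rewrite ge_min lexx.
have tq : t * (q + 1) <= - c by rewrite -ler_pdivlMr ?ge_min ?lexx ?orbT //; lra.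
have := dmin _ (feas t t0 t_le); rewrite lsq_objD -/c -/q; nra.
Qed.

Lemma dot_mul_delta (r : 'cV[R]_K) h :
  \sum_g r g ord0 * (A *m (delta_mx h ord0 : 'cV_K)) g ord0 = (A^T *m r) h ord0.
Proof.
rewrite mxE; apply: eq_bigr => g _; rewrite mulrC !mxE; congr (_ * _).
rewrite (bigD1 h) //= big1 ?addr0 => [|k /negbTE kh]; rewrite mxE ?kh ?eqxx.
  by rewrite mulr1.
by rewrite mulr0.
Qed.

Lemma nnls_grad_ge0 d h : is_nnls d -> 0 <= (A^T *m (A *m d - b)) h ord0.
Proof.
move=> dnnls; rewrite -dot_mul_delta.
apply: (nnls_dir_ge0 (del := 1) dnnls ltr01) => t t0 _ g.
by rewrite !mxE; have := dnnls.1 g; case: (g == h) => /=; lra.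
Qed.

Lemma nnls_grad_eq0 d h : is_nnls d -> 0 < d h ord0 ->
  (A^T *m (A *m d - b)) h ord0 = 0.
Proof.
move=> dnnls dh0; apply/eqP; rewrite eq_le nnls_grad_ge0 // andbT.
have := nnls_dir_ge0 (e := - delta_mx h ord0) dnnls dh0.
under eq_bigr do rewrite mulmxN [X in _ * X]mxE mulrN.
rewrite sumrN oppr_ge0 dot_mul_delta; apply=> t t0 th g.
by rewrite !mxE; have := dnnls.1 g; case: (eqVneq g h) => [->|] /=; lra.
Qed.

Hypothesis A_ge0 : forall g h, 0 <= A g h.

Lemma mulmx_ge0 (x : 'cV[R]_K) : (forall h, 0 <= x h ord0) ->
  forall g, 0 <= (A *m x) g ord0.
Proof. by move=> x0 g; rewrite mxE sumr_ge0 // => h _; rewrite mulr_ge0. Qed.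

Lemma nnls_eq0 d : A \in unitmx -> (forall g, b g ord0 <= 0) -> is_nnls d ->
  d = 0.
Proof.
move=> Au b_le0 [d0 dmin].
suff Ad0 : A *m d = 0 by rewrite -(mulKmx Au d) Ad0 mulmx0.
(* compare with d' = 0: as A d >= 0 >= b, (A d - b)_g^2 >= (A d)_g^2 + b_g^2 *)
apply: sum_sqr_le0.
have := dmin 0 (fun g => ltac:(by rewrite mxE)); rewrite /lsq_obj mulmx0.
rewrite -subr_le0 -sumrB; apply: le_trans; apply: ler_sum => g _.
have := mulmx_ge0 d0 g; have := b_le0 g; rewrite !mxE; nra.
Qed.

Lemma nnls_row_sums_bound d c : is_nnls d -> (forall g, d g ord0 <= c) ->
  \sum_g (A *m (const_mx 1 : 'cV_K)) g ord0 * b g ord0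
    <= c * \sum_g (A *m (const_mx 1 : 'cV_K)) g ord0 ^+ 2.
Proof.
move=> dnnls d_le; set a := A *m (const_mx 1 : 'cV_K).
have feas t : 0 < t -> t <= 1 -> forall g, 0 <= (d + t *: const_mx 1) g ord0.
  by move=> t0 _ g; rewrite !mxE; have := dnnls.1 g; lra.
have r_ge0 := nnls_dir_ge0 dnnls ltr01 feas.
apply: le_trans (_ : _ <= \sum_g (a g ord0 * b g ord0
                                 + (A *m d - b) g ord0 * a g ord0)) _.
  by rewrite big_split lerDl.
rewrite mulr_sumr; apply: ler_sum => g _.
have Ad_le : (A *m d) g ord0 <= c * a g ord0.
  rewrite !mxE mulr_sumr; apply: ler_sum => h _; rewrite mxE mulr1 [c * _]mulrC.
  by rewrite ler_wpM2l ?A_ge0 ?d_le.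
have a_ge0 : 0 <= a g ord0 by apply: mulmx_ge0 => h; rewrite mxE.
have -> : (A *m d - b) g ord0 = (A *m d) g ord0 - b g ord0 by rewrite !mxE.
nra.
Qed.

End NonnegativeLeastSquares.

Definition sel_mx (R : pzRingType) (K : nat) (S : {set 'I_K}) : 'M[R]_(K, #|S|) :=
  \matrix_(i, j) (i == enum_val j)%:R.
Arguments sel_mx {R K} S.

Section SelectionMatrix.
Variables (R : pzRingType) (K : nat) (S : {set 'I_K}).
Local Notation sel_mx := (@sel_mx R K S).

Lemma sel_mxE (m : nat) (y : 'M[R]_(#|S|, m)) j k :
  (sel_mx *m y) (enum_val j) k = y j k.
Proof.
rewrite mxE (bigD1 j) //= big1 ?addr0 => [|l lj]; rewrite mxE.
  by rewrite eqxx mul1r.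
by rewrite (inj_eq enum_val_inj) eq_sym (negbTE lj) mul0r.
Qed.

Lemma sel_mxTE (m : nat) (x : 'M[R]_(K, m)) j k :
  (sel_mx^T *m x) j k = x (enum_val j) k.
Proof.
rewrite mxE (bigD1 (enum_val j)) //= big1 ?addr0 => [|i ij]; rewrite !mxE.
  by rewrite eqxx mul1r.
by rewrite (negbTE ij) mul0r.
Qed.

Lemma sel_mxTK : sel_mx^T *m sel_mx = 1%:M.
Proof.
apply/matrixP => j k; rewrite sel_mxTE mxE !mxE.
by rewrite (inj_eq enum_val_inj).
Qed.

Lemma sel_mx_supp (x : 'cV[R]_K) : (forall i, i \notin S -> x i ord0 = 0) ->
  sel_mx *m (sel_mx^T *m x) = x.
Proof.
move=> xS; apply/matrixP => i k; rewrite (ord1 k).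
have [iS|iNS] := boolP (i \in S); last first.
  rewrite xS // mxE big1 // => j _; rewrite mxE.
  have /negbTE-> : i != enum_val j by apply: contraNneq iNS => ->; apply: enum_valP.
  by rewrite mul0r.
by rewrite -(enum_rankK_in iS iS) sel_mxE sel_mxTE.
Qed.

End SelectionMatrix.
Arguments sel_mxTK {R K} S.

Section SupportLeastSquares.
Variables (R : realType) (K : nat) (A : 'M[R]_K).

Lemma colS_sel S : colS A S = A *m sel_mx S.
Proof.
apply/matrixP => i j; rewrite !mxE (bigD1 (enum_val j)) //= big1 ?addr0.
  by rewrite mxE eqxx mulr1.
by move=> k kj; rewrite mxE (negbTE kj) mulr0.
Qed.

Lemma vtildeE S x g : vtilde A S x g = (sel_mx S *m vtS A S x) g ord0.
Proof.
by rewrite /vtilde mxE; apply: eq_bigr => j _; rewrite [sel_mx S g j]mxE eq_sym.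
Qed.

Lemma vtilde_scaleB S a x y g :
  vtilde A S (a *: x - y) g = a * vtilde A S x g - vtilde A S y g.
Proof. by rewrite !vtildeE /vtS !(linearB, linearZ) /= !mxE. Qed.

Lemma gram_colS_unit S : A \in unitmx -> (colS A S)^T *m colS A S \in unitmx.
Proof.
move=> Au; rewrite -row_free_unit; apply: inj_row_free => x xG0.
set y := colS A S *m x^T.
have yTy0 : y^T *m y = 0 by rewrite trmx_mul trmxK mulmxA -(mulmxA x) xG0 mul0mx.
have y0 : y = 0.
  apply: sum_sqr_le0.
  have -> : \sum_i y i ord0 ^+ 2 = (y^T *m y) ord0 ord0.
    by rewrite [RHS]mxE; apply: eq_bigr => i _; rewrite [y^T _ _]mxE expr2.
  by rewrite yTy0 mxE.
apply: trmx_inj; rewrite trmx0 -[x^T]mul1mx -(sel_mxTK S) -mulmxA.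
by rewrite -[sel_mx S *m _](mulKmx Au) (mulmxA A) -colS_sel -/y y0 !mulmx0.
Qed.

Lemma Sset_mem (d : 'cV[R]_K) g : (g \in Sset d) = (d g ord0 != 0).
Proof. by rewrite inE /lam_of; case: eqP => _ /=; rewrite ?ltxx ?ltey. Qed.

Lemma nnls_vtilde b d : A \in unitmx -> is_nnls A b d ->
  forall g, d g ord0 = vtilde A (Sset d) b g.
Proof.
move=> Au dnnls g; set S := Sset d; set P : 'M[R]_(K, #|S|) := sel_mx S.
have dP : P *m (P^T *m d) = d.
  by apply: sel_mx_supp => i; rewrite Sset_mem negbK => /eqP.
have KKT : P^T *m (A^T *m (A *m d - b)) = 0.
  apply/matrixP => j k; rewrite (ord1 k) sel_mxTE [RHS]mxE.
  apply: (nnls_grad_eq0 dnnls).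
  by rewrite lt_def -Sset_mem enum_valP dnnls.1.
have normal_eq : (colS A S)^T *m colS A S *m (P^T *m d) = (colS A S)^T *m b.
  apply/eqP; rewrite -subr_eq0 colS_sel trmx_mul -!mulmxA -mulmxBr.
  by rewrite dP -mulmxBr KKT.
by rewrite vtildeE /vtS -normal_eq mulKmx ?gram_colS_unit // dP.
Qed.

End SupportLeastSquares.

Section PenaltyWeights.
Variables (R : realType) (K : nat).
Implicit Types (d : 'cV[R]_K) (g : 'I_K).

Lemma lam_of0 g : lam_of (0 : 'cV[R]_K) g = +oo%E.
Proof. by rewrite /lam_of mxE eqxx. Qed.

Lemma lam_ofE d g : d g ord0 != 0 -> lam_of d g = (d g ord0)^-1%:E.
Proof. by rewrite /lam_of => /negbTE->. Qed.

Lemma lam_of_ge0 d g : 0 <= d g ord0 -> (0 <= lam_of d g)%E.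
Proof. by rewrite /lam_of; case: eqP => // _ d0; rewrite lee_fin invr_ge0. Qed.

Lemma lam_of_le d g e : 0 < e -> e^-1 < d g ord0 -> (lam_of d g <= e%:E)%E.
Proof.
move=> e0 de; have d0 : 0 < d g ord0 by apply: lt_trans de; rewrite invr_gt0.
by rewrite lam_ofE ?gt_eqF // lee_fin -[e]invrK lef_pV2 ?posrE ?invr_gt0 ?ltW.
Qed.

End PenaltyWeights.

Section DhatProblem.
Variables (R : realType) (K : nat) (A : 'M[R]_K) (u v : 'cV[R]_K).

Lemma dobjE s d : dobj A u v s d = lsq_obj A ((s ^+ 2)^-1 *: u - v) d.
Proof. by apply: eq_bigr => g _; rewrite !mxE; congr (_ ^+ 2); ring. Qed.

Lemma is_dhat_nnls s d : is_dhat A u v s d -> is_nnls A ((s ^+ 2)^-1 *: u - v) d.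
Proof. by move=> [d0 dmin]; split => // d' d'0; rewrite -!dobjE; apply: dmin. Qed.

Hypotheses (A_ge0 : forall g h, 0 <= A g h) (A_unit : A \in unitmx).

Lemma dhat_eq0 s d : 0 < s -> (forall g, 0 < v g ord0) ->
  (forall g, u g ord0 / v g ord0 <= s ^+ 2) -> is_dhat A u v s d -> d = 0.
Proof.
move=> s0 v0 uv_le /is_dhat_nnls; apply: nnls_eq0 => // g.
have s20 : 0 < s ^+ 2 by rewrite exprn_gt0.
rewrite !mxE subr_le0 mulrC ler_pdivrMr // mulrC -ler_pdivrMr //.
Qed.

Lemma dhat_unbounded (dhat : R -> 'cV[R]_K) c : (0 < K)%N ->
  (forall g, 0 < u g ord0) -> (forall s, 0 < s -> is_dhat A u v s (dhat s)) ->
  \forall s \near 0^'+, exists g, c < dhat s g ord0.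
Proof.
move=> K0 u0 dhatP; set a := A *m (const_mx 1 : 'cV_K).
have a0 g : 0 <= a g ord0 by apply: mulmx_ge0 => // h; rewrite mxE.
set P := \sum_g a g ord0 * u g ord0; set Q := \sum_g a g ord0 * v g ord0.
set T := \sum_g a g ord0 ^+ 2.
have P0 : 0 < P.
  pose g0 := Ordinal K0; have [k Ak] := unitmx_row_neq0 g0 A_unit.
  have ag0 : 0 < a g0 ord0.
    rewrite mxE (bigD1 k) //= mxE mulr1 ltr_pwDl ?lt_def ?Ak ?A_ge0 //.
    by apply: sumr_ge0 => h _; rewrite mxE mulr1.
  rewrite /P (bigD1 g0) //= ltr_pwDl ?mulr_gt0 //.
  by apply: sumr_ge0 => g _; apply: mulr_ge0 (a0 g) (ltW (u0 g)).
(* if all entries of dhat s were <= c, then s^-2 P - Q <= c T *)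
near=> s.
have s0 : 0 < s by near: s; apply: nbhs_right_gt.
have sP : s ^+ 2 * (c * T + Q) < P by near: s; apply: near0_sqr_lt.
apply/existsP/contraT; rewrite negb_exists => /forallP d_gt.
have d_le g : dhat s g ord0 <= c by rewrite leNgt d_gt.
have := nnls_row_sums_bound A_ge0 (is_dhat_nnls (dhatP s s0)) d_le; rewrite -/a -/T.
have -> : \sum_g a g ord0 * ((s ^+ 2)^-1 *: u - v) g ord0 = s ^- 2 * P - Q.
  by rewrite mulr_sumr -sumrB; apply: eq_bigr => g _; rewrite !mxE; ring.
rewrite lerBlDr -(ler_pM2l (exprn_gt0 2 s0)) mulrA mulfV ?gt_eqF ?exprn_gt0 //.
by rewrite mul1r; lra.
Unshelve. all: by end_near.
Qed.

Lemma min_lam_cvg0 (dhat : R -> 'cV[R]_K) : (0 < K)%N ->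
  (forall g, 0 < u g ord0) -> (forall s, 0 < s -> is_dhat A u v s (dhat s)) ->
  (fun s => \big[Order.min/+oo%E]_(g < K) lam_of (dhat s) g) @ 0^'+ --> 0%:E.
Proof.
move=> K0 u0 dhatP; apply: cvge0_le => e e0.
near=> s.
have s0 : 0 < s by near: s; apply: nbhs_right_gt.
have [g dg] : exists g, e^-1 < dhat s g ord0.
  by near: s; apply: dhat_unbounded.
have [d0 _] := dhatP s s0.
rewrite le_bigmin ?leey //= => [|h _]; last exact: lam_of_ge0.
by apply/bigmin_leP; right; exists g => //; apply: lam_of_le.
Unshelve. all: by end_near.
Qed.

Lemma lam_of_rescale s1 s2 d1 d2 g : 0 < s1 -> 0 < s2 ->
  is_dhat A u v s1 d1 -> is_dhat A u v s2 d2 -> Sset d1 = Sset d2 ->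
  g \in Sset d1 ->
  lam_of d1 g = ((s2 ^+ 2 / s1 ^+ 2) * (fine (lam_of d2 g))^-1
                 + (s2 ^+ 2 / s1 ^+ 2 - 1) * vtilde A (Sset d1) v g)^-1%:E.
Proof.
move=> s10 s20 /is_dhat_nnls d1P /is_dhat_nnls d2P S12 gS.
(* on the common support, d_i = s_i^-2 u~ - v~ with the same u~ and v~ *)
have d1g := nnls_vtilde A_unit d1P g; have d2g := nnls_vtilde A_unit d2P g.
rewrite -S12 !vtilde_scaleB in d1g d2g.
have d1g0 : d1 g ord0 != 0 by rewrite -Sset_mem.
have d2g0 : d2 g ord0 != 0 by rewrite -Sset_mem -S12.
rewrite !lam_ofE //= invrK d1g d2g; congr (_^-1%:E); field.
by rewrite !gt_eqF.
Qed.

End DhatProblem.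

Section GroupRidgeData.
Variables (R : realType) (n p K : nat) (X : 'M[R]_(n, p)) (grp : 'I_p -> 'I_K).
Variable lt : R.

Lemma Amat_ge0 g h : 0 <= Amat grp X lt g h.
Proof.
rewrite mxE divr_ge0 // sumr_ge0 // => i _.
by rewrite sumr_ge0 // => j _; apply: sqr_ge0.
Qed.

Lemma Mmat_Nmat : Mmat X lt = (Num.sqrt n%:R)^-1 *: (Nmat X lt *m X).
Proof.
rewrite /Mmat /Nmat -scalemxAl scalerA -invfM -expr2 sqr_sqrtr ?ler0n //.
by rewrite -mulmxA !scalemxAr.
Qed.

Lemma vvec_gt0 g : (0 < n)%N -> Amat grp X lt \in unitmx ->
  0 < vvec grp X lt g ord0.
Proof.
move=> n0 Au; have [h Agh] := unitmx_row_neq0 g Au.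
have N2_ge0 j : true -> 0 <= \sum_(i < n) Nmat X lt j i ^+ 2.
  by move=> _; apply: sumr_ge0 => i _; apply: sqr_ge0.
rewrite lt_def mxE; apply/andP; split; last first.
  by apply: divr_ge0 => //; apply: sumr_ge0 => j _; apply: N2_ge0.
apply: contraNneq Agh => /eqP; rewrite mulf_eq0 invr_eq0 pnatr_eq0 eqn0Ngt n0 orbF.
move=> /eqP N2_0; have N0 j i : grp j == g -> Nmat X lt j i = 0.
  move=> gj; apply/eqP; rewrite -sqrf_eq0; apply/eqP.
  have N2j := psumr_eq0P (fun j _ => N2_ge0 j isT) N2_0 gj.
  exact: psumr_eq0P (fun i _ => sqr_ge0 (Nmat X lt j i)) N2j i isT.
rewrite mxE big1 ?mul0r // => i gi; apply: big1 => j _.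
by rewrite Mmat_Nmat !mxE big1 ?mulr0 ?expr0n // => k _; rewrite N0 ?mul0r.
Qed.

End GroupRidgeData.

Lemma group_ridge_eq0 (R : realType) (n p K : nat) (X : 'M[R]_(n, p)) Y
    (grp : 'I_p -> 'I_K) (lam : 'I_K -> \bar R) w :
  (forall g, lam g = +oo%E) -> is_group_ridge grp X Y lam w -> w = 0.
Proof.
move=> lam_oo [w_feas _]; apply/matrixP => j k.
by rewrite (ord1 k) mxE; apply: w_feas.
Qed.

Theorem proposition1 (R : realType) (n p K : nat)
  (X : 'M[R]_(n, p)) (Y : 'cV[R]_n) (grp : 'I_p -> 'I_K) (lt : R)
  (dhat : R -> 'cV[R]_K) :
  (0 < n)%N -> (0 < K)%N -> 0 < lt ->
  let A := Amat grp X lt in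
  let u := uvec grp X Y lt in
  let v := vvec grp X lt in
  (forall s, 0 < s -> is_dhat A u v s (dhat s)) ->
  A \in unitmx ->
  (forall g, 0 < u g ord0) ->
  (* 1. *)
  (forall s, 0 < s -> (forall g, u g ord0 / v g ord0 <= s ^+ 2) ->
     (forall g, lam_of (dhat s) g = +oo%E) /\
     (forall w, is_group_ridge grp X Y (lam_of (dhat s)) w -> w = 0)) /\
  (* 2. *)
  ((fun s => \big[Order.min/+oo%E]_(g < K) lam_of (dhat s) g)
      @ 0^'+ --> 0%:E) /\
  (* 3. *)
  (forall s1 s2, 0 < s1 -> 0 < s2 -> Sset (dhat s1) = Sset (dhat s2) ->
     forall g, g \in Sset (dhat s1) ->
       lam_of (dhat s1) g =
         ((s2 ^+ 2 / s1 ^+ 2) * (fine (lam_of (dhat s2) g))^-1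
          + (s2 ^+ 2 / s1 ^+ 2 - 1) * vtilde A (Sset (dhat s1)) v g)^-1%:E).
Proof.
move=> n0 K0 _ A u v dhatP A_unit u_gt0.
have A_ge0 : forall g h, 0 <= A g h := Amat_ge0 X grp lt.
have v_gt0 g : 0 < v g ord0 := vvec_gt0 g n0 A_unit.
split; [|split].
- move=> s s0 uv_le.
  have dhat0 := dhat_eq0 A_ge0 A_unit s0 v_gt0 uv_le (dhatP s s0).
  have lam_oo g : lam_of (dhat s) g = +oo%E by rewrite dhat0 lam_of0.
  by split=> // w; apply: group_ridge_eq0.
- exact: (min_lam_cvg0 A_ge0 A_unit K0 u_gt0 dhatP).
- move=> s1 s2 s10 s20 S12 g gS.
  by rewrite (lam_of_rescale A_unit s10 s20 (dhatP s1 s10) (dhatP s2 s20) S12 gS).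
Qed.
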